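(* Let $\Delta=\{q\in\mathbb R_+^C:\sum_cq_c=1\}$ and let $\widehat p$ be in the relative interior of $\Delta$ (all entries positive). For any $\widehat t,t^\star\in\mathbb R^C$, any $\rho\in\mathbb R_+^C$ and any $\varepsilon\ge\widehat p^\top\rho$, \[\sup\Big\{q^\top t^\star-\widehat p^\top\widehat t:\ q\in\Delta,\ \sum_{c=1}^Cq_c(\log q_c-\log\widehat p_c+\rho_c)\le\varepsilon\Big\}\le\|t^\star-\widehat t\|_\infty+\frac{\sqrt{2\varepsilon}}{\min_c\sqrt{\widehat p_c}}\sqrt{\sum_{c=1}^C\widehat p_c(\widehat t_c-\bar t)^2},\] where $\bar t=\widehat p^\top\widehat t$.
   Context: The convention $0\log0=0$ is used. *)

From HB Require Import structures.
From mathcomp Require Import all_boot all_order all_algebra.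
From mathcomp Require Import reals exp.
Set Implicit Arguments. Unset Strict Implicit. Unset Printing Implicit Defensive.
Import Order.TTheory GRing.Theory Num.Theory.
Local Open Scope ring_scope.

Section Defs.
Variables (R : realType) (C : nat).

Definition in_simplex (q : 'I_C -> R) : Prop :=
  (forall c, 0 <= q c) /\ \sum_c q c = 1.

Definition dotv (a b : 'I_C -> R) : R := \sum_c a c * b c.

(* sum_c q_c (log q_c - log phat_c + rho_c); with q_c = 0 the term is 0
   (convention 0 log 0 = 0, and the factor q_c = 0 kills the rest) *)
Definition kl_rho (q p rho : 'I_C -> R) : R :=
  \sum_c q c * (ln (q c) - ln (p c) + rho c).

Definition supnorm (a : 'I_C -> R) : R := \big[Num.max/0]_c `|a c|.
End Defs.

(* Since q and p̂ both sum to 1, q·t* − p̂·t̂ = q·(t* − t̂) + (q − p̂)·(t̂ − t̄).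
   The first term is at most ‖t* − t̂‖∞.  By a weighted Cauchy–Schwarz
   inequality the second is at most
     sqrt (Σ (q_c − p̂_c)² / p̂_c) · sqrt (Σ p̂_c (t̂_c − t̄)²),
   and Σ (q_c − p̂_c)² / p̂_c ≤ Σ (q_c − p̂_c)² / min_c p̂_c.  Finally
   Σ (q_c − p̂_c)² ≤ 2ε by the Pinsker-type bound
   q log (q/p) ≥ (q − p) + (q − p)²/2 on [0, 1], summed over c: the linear
   terms cancel and the ρ-terms are nonnegative. *)

From HB Require Import structures.
From mathcomp Require Import all_boot all_order all_algebra.
From mathcomp Require Import reals exp.
From mathcomp Require Import classical_sets topology normedtype derive.
From mathcomp Require Import ring lra.
Import Order.TTheory GRing.Theory Num.Theory.
Import numFieldNormedType.Exports.
Local Open Scope ring_scope.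

Lemma sqr_sum_mul_le (R : realDomainType) (I : finType) (x y : I -> R) :
  (\sum_i x i * y i) ^+ 2 <= (\sum_i x i ^+ 2) * (\sum_i y i ^+ 2).
Proof.
have double_sum (a b : I -> R) :
    \sum_i \sum_j a i * b j = (\sum_i a i) * (\sum_j b j).
  by rewrite mulr_suml; apply: eq_bigr => i _; rewrite mulr_sumr.
have lagrange : \sum_i \sum_j (x i * y j - x j * y i) ^+ 2 =
    2 * ((\sum_i x i ^+ 2) * (\sum_i y i ^+ 2) - (\sum_i x i * y i) ^+ 2).
  transitivity (\sum_i \sum_j (x i ^+ 2 * y j ^+ 2 + y i ^+ 2 * x j ^+ 2
                   - 2 * (x i * y i) * (x j * y j))).
    by apply: eq_bigr => i _; apply: eq_bigr => j _; ring.
  under eq_bigr do rewrite sumrB big_split.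
  rewrite sumrB big_split /= !double_sum -mulr_sumr.
  ring.
rewrite -subr_ge0 -(@pmulr_rge0 _ 2) // -lagrange.
by apply: sumr_ge0 => i _; apply: sumr_ge0 => j _; apply: sqr_ge0.
Qed.

Lemma sum_mul_le_weighted [R : rcfType] [I : finType] [w : I -> R] (x y : I -> R) :
  (forall i, 0 < w i) ->
  \sum_i x i * y i <=
    Num.sqrt (\sum_i x i ^+ 2 / w i) * Num.sqrt (\sum_i w i * y i ^+ 2).
Proof.
move=> w_gt0.
have w_ge0 i : 0 <= w i := ltW (w_gt0 i).
pose a i := x i / Num.sqrt (w i); pose b i := Num.sqrt (w i) * y i.
have xyE i : x i * y i = a i * b i.
  by rewrite /a /b mulrA divfK // gt_eqF // sqrtr_gt0.
have a2E i : x i ^+ 2 / w i = a i ^+ 2 by rewrite /a expr_div_n sqr_sqrtr.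
have b2E i : w i * y i ^+ 2 = b i ^+ 2 by rewrite /b exprMn sqr_sqrtr.
under eq_bigr do rewrite xyE.
under [\sum_i x i ^+ 2 / w i]eq_bigr do rewrite a2E.
under [\sum_i w i * y i ^+ 2]eq_bigr do rewrite b2E.
rewrite -sqrtrM ?sumr_ge0 // => [|i _]; last exact: sqr_ge0.
apply: le_trans (ler_norm _) _.
by rewrite -sqrtr_sqr ler_wsqrtr // sqr_sum_mul_le.
Qed.

Lemma sqrt_sum_sqr_div_le [R : rcfType] [I : finType] [w : I -> R] (x : I -> R) [m : R] :
  0 < m -> (forall i, m ^+ 2 <= w i) ->
  Num.sqrt (\sum_i x i ^+ 2 / w i) <= Num.sqrt (\sum_i x i ^+ 2) / m.
Proof.
move=> m_gt0 m_le.
have m2_gt0 : 0 < m ^+ 2 by rewrite exprn_gt0.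
rewrite -[m in _ / m]gtr0_norm // -sqrtr_sqr -(sqrtrV (ltW m2_gt0)) -sqrtrM.
  2: by apply: sumr_ge0 => i _; exact: sqr_ge0.
apply: ler_wsqrtr; rewrite mulr_suml; apply: ler_sum => i _.
by rewrite ler_wpM2l ?sqr_ge0 // lef_pV2 ?posrE // (lt_le_trans m2_gt0).
Qed.

Section PinskerGap.
Context {R : realType}.

Definition pinsker_gap (q p : R) : R :=
  q * (ln q - ln p) - (q - p) - (q - p) ^+ 2 / 2.

Lemma is_derive_pinsker_gap (q p : R) : 0 < p ->
  is_derive p 1 (pinsker_gap q) ((p - q) * (p^-1 - 1)).
Proof.
move=> p_gt0.
have dq := is_deriveB (is_derive_cst q p 1) (@is_derive_id _ _ p 1).
have := is_deriveB (is_deriveB (is_deriveM (is_derive_cst q p 1)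
  (is_deriveB (is_derive_cst (ln q) p 1) (is_derive1_ln p_gt0))) dq)
  (is_deriveM (is_deriveX 2 dq) (is_derive_cst (2^-1 : R) p 1)).
move=> /is_derive_eq; apply.
rewrite /= !scaler0 !add0r !addr0 -![_ *: _]/(_ * _) expr1.
change (q * - p^-1 - -1 - 2^-1 * (2 * (q - p) * -1) = (p - q) * (p^-1 - 1)).
by field; rewrite gt_eqF.
Qed.

(* As a function of p, the gap has derivative (p - q) (1/p - 1), whose sign is
   that of p - q on ]0, 1]: the gap is minimal, and zero, at p = q. *)
Lemma pinsker_gap_ge0 [q p : R] : 0 <= q <= 1 -> 0 < p <= 1 ->
  0 <= pinsker_gap q p.
Proof.
move=> /andP[q_ge0 q_le1] /andP[p_gt0 p_le1].
move: q_ge0; rewrite le_eqVlt => /orP[/eqP<-|q_gt0].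
  by rewrite /pinsker_gap mul0r; nra.
have gap_q : pinsker_gap q q = 0.
  by rewrite /pinsker_gap !subrr mulr0 expr0n mul0r !subr0.
have gap_derivable (s : R) : 0 < s -> derivable (pinsker_gap q) s 1.
  by move=> /(is_derive_pinsker_gap q) [].
have gap'E (s : R) : 0 < s -> derive1 (pinsker_gap q) s = (s - q) * (s^-1 - 1).
  by move=> /(is_derive_pinsker_gap q) gap'; rewrite derive1E derive_val.
have gap_cont (a b : R) : 0 < a -> {within `[a, b], continuous pinsker_gap q}%classic.
  move=> a_gt0; apply: derivable_within_continuous => s.
  by rewrite in_itv => /andP[a_le_s _]; apply: gap_derivable; exact: lt_le_trans a_le_s.
rewrite -gap_q; have [le_pq|le_qp] := leP p q.
- apply: (ler0_derive1_nincr (a := p) (b := q)); last 4 first.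
  + exact: gap_cont.
  + exact: lexx.
  + exact: le_pq.
  + exact: lexx.
  + by move=> s; rewrite in_itv => /andP[ps _]; apply: gap_derivable; exact: lt_trans ps.
  + move=> s; rewrite in_itv => /andP[ps sq]; have s_gt0 := lt_trans p_gt0 ps.
    rewrite gap'E //; apply: mulr_le0_ge0; first by rewrite subr_le0 ltW.
    by rewrite subr_ge0 invf_ge1 // (le_trans (ltW sq)).
- apply: (ger0_derive1_ndecr (a := q) (b := p)); last 4 first.
  + exact: gap_cont.
  + exact: lexx.
  + exact: ltW.
  + exact: lexx.
  + by move=> s; rewrite in_itv => /andP[qs _]; apply: gap_derivable; exact: lt_trans qs.
  + move=> s; rewrite in_itv => /andP[qs sp]; have s_gt0 := lt_trans q_gt0 qs.
    rewrite gap'E //; apply: mulr_ge0; first by rewrite subr_ge0 ltW.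
    by rewrite subr_ge0 invf_ge1 // (le_trans (ltW sp)).
Qed.

Lemma pinsker_term_le [q p : R] : 0 <= q <= 1 -> 0 < p <= 1 ->
  (q - p) + (q - p) ^+ 2 / 2 <= q * (ln q - ln p).
Proof. by move=> q01 p01; have := pinsker_gap_ge0 q01 p01; rewrite /pinsker_gap; lra. Qed.

End PinskerGap.

Section Simplex.
Context {R : realType} {C : nat}.
Implicit Types (q p rho a b : 'I_C -> R).

Lemma in_simplex_le1 [q] : in_simplex q -> forall c, q c <= 1.
Proof. by case=> q_ge0 <- c; rewrite (bigD1 c) //= lerDl sumr_ge0. Qed.

Lemma in_simplex_pos [p] : (forall c, 0 < p c) -> \sum_c p c = 1 -> in_simplex p.
Proof. by move=> p_gt0 p_sum1; split=> // c; apply: ltW. Qed.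

Lemma dotv_le_supnorm [q] a : in_simplex q -> dotv q a <= supnorm a.
Proof.
case=> q_ge0 q_sum1; rewrite -[supnorm a]mul1r -q_sum1 mulr_suml.
apply: ler_sum => c _; rewrite ler_wpM2l //.
exact: le_trans (ler_norm _) (le_bigmax _ (fun c => `|a c|) c).
Qed.

Lemma dotv_sub_centered [q p] a b : \sum_c q c = \sum_c p c ->
  dotv q a - dotv p b =
    dotv q (fun c => a c - b c) + dotv (fun c => q c - p c) (fun c => b c - dotv p b).
Proof.
move=> q_sum_p.
have centered : \sum_c (q c - p c) * dotv p b = 0.
  by rewrite -mulr_suml sumrB q_sum_p subrr mul0r.
rewrite -[RHS]addr0 -[X in _ = _ + X]centered /dotv -sumrB -!big_split /=.
by apply: eq_bigr => c _; ring.
Qed.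

Lemma sum_sqr_sub_le_kl [q p rho] : in_simplex q -> (forall c, 0 < p c) ->
  \sum_c p c = 1 -> (forall c, 0 <= rho c) ->
  \sum_c (q c - p c) ^+ 2 <= 2 * kl_rho q p rho.
Proof.
move=> q_simplex p_gt0 p_sum1 rho_ge0.
have [q_ge0 q_sum1] := q_simplex.
have term c : (q c - p c) + (q c - p c) ^+ 2 / 2 <= q c * (ln (q c) - ln (p c) + rho c).
  have q01 : 0 <= q c <= 1 by rewrite q_ge0 in_simplex_le1.
  have p01 : 0 < p c <= 1 by rewrite p_gt0 (in_simplex_le1 (in_simplex_pos p_gt0 p_sum1)).
  rewrite mulrDr; apply: le_trans (pinsker_term_le q01 p01) _.
  by rewrite lerDl mulr_ge0.
have : \sum_c ((q c - p c) + (q c - p c) ^+ 2 / 2) <= kl_rho q p rho.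
  by apply: ler_sum => c _; exact: term.
by rewrite big_split /= sumrB q_sum1 p_sum1 subrr add0r -mulr_suml; lra.
Qed.

End Simplex.

Theorem lemmaC1 (R : realType) (C : nat) (hC : (0 < C)%N)
  (phat that tstar rho : 'I_C -> R) (eps : R) :
  (forall c, 0 < phat c) -> \sum_c phat c = 1 ->
  (forall c, 0 <= rho c) ->
  dotv phat rho <= eps ->
  forall q : 'I_C -> R, in_simplex q -> kl_rho q phat rho <= eps ->
  dotv q tstar - dotv phat that <=
    supnorm (fun c => tstar c - that c)
    + Num.sqrt (2 * eps)
      / (\big[Num.min/Num.sqrt (phat (Ordinal hC))]_c Num.sqrt (phat c))
      * Num.sqrt (\sum_c phat c * (that c - dotv phat that) ^+ 2).
Proof.
move=> p_gt0 p_sum1 rho_ge0 _ q q_simplex kl_le.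
set m := \big[Num.min/_]_c _.
have m_gt0 : 0 < m by apply/bigmin_gtP; split=> [|c _]; rewrite sqrtr_gt0.
have m_le c : m ^+ 2 <= phat c.
  rewrite -(sqr_sqrtr (ltW (p_gt0 c))) ler_pXn2r ?nnegrE ?sqrtr_ge0 ?(ltW m_gt0) //.
  exact: bigmin_le.
have [_ q_sum1] := q_simplex.
rewrite (dotv_sub_centered tstar that (etrans q_sum1 (esym p_sum1))).
apply: lerD; first exact: dotv_le_supnorm.
apply: le_trans (sum_mul_le_weighted _ _ p_gt0) _.
rewrite ler_wpM2r ?sqrtr_ge0 //; apply: le_trans (sqrt_sum_sqr_div_le _ m_gt0 m_le) _.
rewrite ler_wpM2r ?invr_ge0 ?(ltW m_gt0) //; apply: ler_wsqrtr.
apply: le_trans (sum_sqr_sub_le_kl q_simplex p_gt0 p_sum1 rho_ge0) _.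
by rewrite ler_pM2l.
Qed.
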